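(* Let $X$ be a proper, path connected metric space and let $S=\{x_i\}_{i\in I}$ be a discrete subset of $X$. Fix a positive integer $n\le \#(S)$. Then $$\bigcup_{i\in I} B_n(x_i)=X \qquad\text{and}\qquad b_n(x_i)\cap b_n(x_j)=\emptyset \ \text{ whenever } i\neq j.$$
   Context: $(X,d)$ is a metric space. It is proper if for every $x\in X$ the function $d(x,\cdot)$ is a proper map (in particular every closed ball is compact). A subset $S\subseteq X$ is discrete if every compact subset of $X$ contains only finitely many points of $S$. For $x\in X$ and $r>0$ write $N_r(x)=\{y\in X: d(x,y)<r\}$ and $C_r(x)=\{y\in X: d(x,y)=r\}$; $\#(\cdot)$ denotes cardinality. For $x_0\in S$, a positive integer $n\le\#(S)$, and $x\in X$ with $r=d(x,x_0)$, define: $x\in b_n(x_0)$ iff $\#(N_r(x)\cap S)=n-1$ and $C_r(x)\cap S=\{x_0\}$; and $x\in B_n(x_0)$ iff $\#(N_r(x)\cap S)=m$ and $\#(C_r(x)\cap S)=\ell$ for some integers $m\ge 0$, $\ell\ge 1$ with $m+1\le n\le m+\ell$. ($B_n(x_0)$ is called the $n$-th Brillouin zone with base point $x_0$.) *)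

From Stdlib Require Import Reals List.
Import ListNotations.
Open Scope R_scope.

Section MetricDefs.
Variable X : Type.
Variable d : X -> X -> R.

Definition is_metric : Prop :=
  (forall x y, 0 <= d x y) /\
  (forall x y, d x y = 0 <-> x = y) /\
  (forall x y, d x y = d y x) /\
  (forall x y z, d x z <= d x y + d y z).

Definition m_open (U : X -> Prop) : Prop :=
  forall x, U x -> exists e, 0 < e /\ forall y, d x y < e -> U y.

Definition m_compact (K : X -> Prop) : Prop :=
  forall (I : Type) (U : I -> X -> Prop),
    (forall i, m_open (U i)) ->
    (forall x, K x -> exists i, U i x) ->
    exists l : list I, forall x, K x -> exists i, In i l /\ U i x.

Definition path_connected : Prop :=
  forall x y : X, exists g : R -> X,
    g 0 = x /\ g 1 = y /\
    forall t, 0 <= t <= 1 -> forall e, 0 < e -> exists delta, 0 < delta /\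
      forall s, 0 <= s <= 1 -> Rabs (s - t) < delta -> d (g s) (g t) < e.

Definition card_eq (P : X -> Prop) (k : nat) : Prop :=
  exists l : list X, NoDup l /\ length l = k /\ forall y, P y <-> In y l.

Definition card_ge (P : X -> Prop) (k : nat) : Prop :=
  exists l : list X, NoDup l /\ length l = k /\ forall y, In y l -> P y.

Definition discrete (S : X -> Prop) : Prop :=
  forall K, m_compact K -> exists l : list X, forall y, K y -> S y -> In y l.

Definition N_ball (r : R) (x : X) : X -> Prop := fun y => d x y < r.
Definition C_sph (r : R) (x : X) : X -> Prop := fun y => d x y = r.

Definition b_zone (S : X -> Prop) (n : nat) (x0 : X) : X -> Prop :=
  fun x => let r := d x x0 in
    card_eq (fun y => N_ball r x y /\ S y) (n - 1)%nat /\
    (forall y, (C_sph r x y /\ S y) <-> y = x0).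

Definition B_zone (S : X -> Prop) (n : nat) (x0 : X) : X -> Prop :=
  fun x => let r := d x x0 in
    exists m l : nat,
      card_eq (fun y => N_ball r x y /\ S y) m /\
      card_eq (fun y => C_sph r x y /\ S y) l /\
      (1 <= l)%nat /\ (m + 1 <= n)%nat /\ (n <= m + l)%nat.
End MetricDefs.

Definition Rdist (a b : R) : R := Rabs (a - b).

Definition proper_metric (X : Type) (d : X -> X -> R) : Prop :=
  forall x : X, forall K : R -> Prop, @m_compact R Rdist K ->
    @m_compact X d (fun y => K (d x y)).

(* By properness and discreteness only finitely many sites (points of
   S) lie in any closed ball around x, so among the sites y whose closed ball
   of radius d(x,y) already holds n sites there is one, x0, closest to x.  For
   r = d(x,x0) the open ball N_r(x) holds fewer than n sites (otherwise the
   farthest of them would be a closer such site), while the closed ball holds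
   at least n; hence x lies in B_n(x0).

   If x lay in b_n(xi) and b_n(xj) with d(x,xi) < d(x,xj), the open ball of
   radius d(x,xj) would contain the n-1 sites of N_{d(x,xi)}(x) together with
   xi, i.e. n sites instead of n-1; equal distances are excluded by the sphere
   condition of b_n(xi). *)

From Stdlib Require Import Reals List Lra Lia Classical ClassicalEpsilon.
Open Scope R_scope.

Section Counting.
Variable X : Type.

Lemma card_eq_of_incl_list (L : list X) :
  forall P : X -> Prop, (forall y, P y -> In y L) -> exists k, card_eq X P k.
Proof.
  induction L as [|a L IH]; intros P HP.
  - exists 0%nat, nil; repeat split; [constructor | apply HP | intros []].
  - destruct (IH (fun y => P y /\ y <> a)) as [k [l [Hnd [_ Hl]]]].
    { intros y [Py Hya]. destruct (HP y Py); [congruence | assumption]. }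
    destruct (classic (P a)) as [Pa | nPa].
    + exists (S (length l)), (a :: l); repeat split.
      * constructor; [rewrite <- Hl; tauto | assumption].
      * intros Py. destruct (classic (y = a)); [left | right; apply Hl]; auto.
      * intros [<- | Hy]; [assumption | apply Hl; assumption].
    + exists (length l), l; repeat split; [assumption | |].
      * intros Py. apply Hl. split; [assumption | intros ->; contradiction].
      * intros Hy. apply Hl. assumption.
Qed.

Lemma card_ge_of_list (P : X -> Prop) (l : list X) (n : nat) :
  NoDup l -> (n <= length l)%nat -> (forall y, In y l -> P y) -> card_ge X P n.
Proof.
  rewrite <- (firstn_skipn n l). intros Hnd Hlen HP.
  rewrite firstn_skipn in Hlen.
  exists (firstn n l); repeat split.
  - exact (NoDup_app_remove_r _ _ Hnd).
  - exact (firstn_length_le l Hlen).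
  - intros y Hy. apply HP, in_or_app. left; exact Hy.
Qed.

Lemma card_ge_card_eq_le (P : X -> Prop) (n m : nat) :
  card_ge X P n -> card_eq X P m -> (n <= m)%nat.
Proof.
  intros [lP [HndP [<- HlP]]] [lQ [_ [<- HlQ]]].
  apply NoDup_incl_length; [assumption |].
  intros y Hy. apply HlQ, HlP, Hy.
Qed.

Lemma card_ge_le_add (P A B : X -> Prop) (n m k : nat) :
  card_ge X P n -> card_eq X A m -> card_eq X B k ->
  (forall y, P y -> A y \/ B y) -> (n <= m + k)%nat.
Proof.
  intros [lP [HndP [<- HlP]]] [lA [_ [<- HlA]]] [lB [_ [<- HlB]]] HAB.
  rewrite <- length_app. apply NoDup_incl_length; [assumption |].
  intros y Hy. apply in_or_app.
  destruct (HAB y (HlP y Hy)); [left; apply HlA | right; apply HlB]; assumption.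
Qed.

Lemma list_argmin (f : X -> R) (Q : X -> Prop) (L : list X) :
  (exists y, In y L /\ Q y) ->
  exists y0, In y0 L /\ Q y0 /\ forall y, In y L -> Q y -> f y0 <= f y.
Proof.
  induction L as [|a L IH]; intros [y [Hy Qy]]; [destruct Hy |].
  destruct (classic (exists y, In y L /\ Q y)) as [HL | HL].
  - destruct (IH HL) as [y1 [H1 [Q1 M1]]].
    destruct (classic (Q a /\ f a <= f y1)) as [[Qa Ha] | Ha].
    + exists a; repeat split; [left; reflexivity | assumption |].
      intros z [<- | Hz] Qz; [lra | specialize (M1 z Hz Qz); lra].
    + exists y1; repeat split; [right; assumption | assumption |].
      intros z [<- | Hz] Qz; [| auto].
      destruct (Rle_dec (f y1) (f a)); [assumption | exfalso; apply Ha; split; [assumption | lra]].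
  - destruct Hy as [<- | Hy]; [| exfalso; apply HL; eauto].
    exists a; repeat split; [left; reflexivity | assumption |].
    intros z [<- | Hz] Qz; [lra | exfalso; apply HL; eauto].
Qed.

End Counting.

Lemma compact_interval (a b : R) : @m_compact R Rdist (fun t => a <= t <= b).
Proof.
  intros I U HU Hcov.
  destruct (Rle_dec a b) as [Hab | Hab]; [| exists nil; intros x Hx; lra].
  destruct (Hcov a) as [i0 _]; [lra |].
  assert (Hch : forall y, exists i, a <= y <= b -> U i y).
  { intros y. destruct (classic (a <= y <= b)) as [Hy | Hy].
    - destruct (Hcov y Hy) as [i Hi]. exists i; auto.
    - exists i0; tauto. }
  set (ch := fun y => proj1_sig (constructive_indefinite_description _ (Hch y))).
  assert (Hchs : forall y, a <= y <= b -> U (ch y) y).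
  { intros y. unfold ch. destruct constructive_indefinite_description; assumption. }
  assert (Hdom : forall y, (exists z, a <= y <= b /\ U (ch y) z) -> a <= y <= b).
  { intros y [z [Hy _]]; exact Hy. }
  set (fam := mkfamily (fun y => a <= y <= b) (fun y z => a <= y <= b /\ U (ch y) z) Hdom).
  destruct (compact_P3 a b fam) as [D [Hcv [lR HlR]]].
  - split.
    + intros x Hx. exists x. simpl. auto.
    + intros y z [Hy Hz]. simpl in *.
      destruct (HU (ch y) z Hz) as [e [He Hball]].
      exists (mkposreal e He). intros w Hw. unfold disc in Hw; simpl in Hw.
      split; [assumption |]. apply Hball. unfold Rdist. rewrite Rabs_minus_sym. exact Hw.
  - exists (map ch lR). intros x Hx.
    destruct (Hcv x Hx) as [y [[Hy Hux] Dy]]. simpl in *.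
    exists (ch y); split; [apply in_map, HlR; split |]; assumption.
Qed.

Section BrillouinZones.
Variables (X : Type) (d : X -> X -> R) (S : X -> Prop) (n : nat).

Lemma b_zone_nearer_farther (xi xj x : X) :
  S xi -> d x xi < d x xj -> ~ (b_zone X d S n xi x /\ b_zone X d S n xj x).
Proof.
  intros Si Hlt [[[li [Hnd [Hlen Hli]]] _] [Hcj _]].
  enough (Hge : card_ge X (fun y => N_ball X d (d x xj) x y /\ S y) (1 + (n - 1))%nat)
    by (pose proof (card_ge_card_eq_le _ _ _ _ Hge Hcj); lia).
  apply (card_ge_of_list _ _ (xi :: li)); [| simpl; lia |].
  - constructor; [| assumption]. rewrite <- Hli. unfold N_ball. lra.
  - intros y [<- | Hy]; [unfold N_ball; split; assumption |].
    apply Hli in Hy as [Hy Sy]. unfold N_ball in *. split; [lra | assumption].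
Qed.

Lemma b_zone_disjoint (xi xj x : X) :
  S xi -> S xj -> xi <> xj -> ~ (b_zone X d S n xi x /\ b_zone X d S n xj x).
Proof.
  intros Si Sj Hne [Hbi Hbj].
  destruct (Rtotal_order (d x xi) (d x xj)) as [Hij | [Heq | Hji]].
  - exact (b_zone_nearer_farther xi xj x Si Hij (conj Hbi Hbj)).
  - apply Hne. symmetry. apply (proj2 Hbi). split; [symmetry; exact Heq | exact Sj].
  - exact (b_zone_nearer_farther xj xi x Sj Hji (conj Hbj Hbi)).
Qed.

Definition n_sites_within (x : X) (t : R) : Prop :=
  card_ge X (fun z => d x z <= t /\ S z) n.

Hypothesis hpos : forall x y, 0 <= d x y.
Hypothesis hprop : proper_metric X d.
Hypothesis hdisc : discrete X d S.
Hypothesis hn1 : (1 <= n)%nat.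

Lemma card_eq_of_sub_closed_ball (x : X) (t : R) (P : X -> Prop) :
  (forall y, P y -> d x y <= t /\ S y) -> exists k, card_eq X P k.
Proof.
  intros HP.
  destruct (hdisc _ (hprop x _ (compact_interval 0 t))) as [L HL].
  apply (card_eq_of_incl_list X L). intros y Py.
  destruct (HP y Py) as [Hy Sy]. apply HL; [split; [apply hpos | assumption] | assumption].
Qed.

Lemma exists_critical_site (x : X) :
  card_ge X S n ->
  exists x0, S x0 /\ n_sites_within x (d x x0) /\
    forall y, S y -> d x y < d x x0 -> ~ n_sites_within x (d x y).
Proof.
  intros [l0 [Hnd0 [Hlen0 HS0]]].
  destruct (list_argmin X (fun y => - d x y) (fun _ => True) l0) as [ys [Hys [_ Hfar]]].
  { destruct l0 as [| a l0]; [simpl in Hlen0; lia | exists a; split; [left |]; auto]. }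
  assert (Sys : S ys) by (apply HS0; assumption).
  assert (Hnys : n_sites_within x (d x ys)).
  { exists l0; split; [assumption | split; [assumption |]].
    intros y Hy. split; [specialize (Hfar y Hy I); lra | apply HS0, Hy]. }
  destruct (card_eq_of_sub_closed_ball x (d x ys) (fun y => d x y <= d x ys /\ S y))
    as [k [lb [_ [_ Hlb]]]]; [auto |].
  destruct (list_argmin X (d x) (fun y => S y /\ n_sites_within x (d x y)) lb)
    as [x0 [_ [[Sx0 Hx0] Hmin]]].
  { exists ys. split; [apply Hlb; split; [lra | assumption] | split; assumption]. }
  assert (Hx0ys : d x x0 <= d x ys).
  { apply Hmin; [apply Hlb; split; [lra | assumption] | split; assumption]. }
  exists x0; repeat split; [assumption | assumption |].
  intros y Sy Hy Hny.
  enough (d x x0 <= d x y) by lra.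
  apply Hmin; [apply Hlb; split; [lra | assumption] | split; assumption].
Qed.

Lemma B_zone_of_critical_site (x x0 : X) :
  S x0 -> n_sites_within x (d x x0) ->
  (forall y, S y -> d x y < d x x0 -> ~ n_sites_within x (d x y)) ->
  B_zone X d S n x0 x.
Proof.
  intros Sx0 Hn Hmin. set (r := d x x0).
  destruct (card_eq_of_sub_closed_ball x r (fun y => N_ball X d r x y /\ S y))
    as [m Hm]; [intros y [Hy Sy]; unfold N_ball in Hy; split; [lra | assumption] |].
  destruct (card_eq_of_sub_closed_ball x r (fun y => C_sph X d r x y /\ S y))
    as [l Hl]; [intros y [Hy Sy]; unfold C_sph in Hy; split; [lra | assumption] |].
  exists m, l; repeat split; [assumption | assumption | | |].
  - destruct Hl as [l2 [_ [<- Hl2]]].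
    destruct l2 as [| y l2]; [exfalso | simpl; lia].
    apply (Hl2 x0). split; [reflexivity | assumption].
  - destruct (Nat.lt_ge_cases m n) as [Hc | Hc]; [lia | exfalso].
    destruct Hm as [l1 [Hnd1 [<- Hl1]]].
    destruct (list_argmin X (fun y => - d x y) (fun _ => True) l1) as [y1 [Hy1 [_ Hfar]]].
    { destruct l1 as [| a l1]; [simpl in Hc; lia | exists a; split; [left |]; auto]. }
    apply Hl1 in Hy1 as Hy1'. destruct Hy1' as [Hd1 Sy1].
    apply (Hmin y1 Sy1 Hd1).
    apply (card_ge_of_list _ _ l1 _ Hnd1 Hc).
    intros y Hy. specialize (Hfar y Hy I). split; [lra | apply Hl1; assumption].
  - apply (card_ge_le_add X _ _ _ _ _ _ Hn Hm Hl).
    intros y [Hy Sy]. unfold N_ball, C_sph.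
    destruct (Rle_lt_or_eq_dec _ _ Hy); [left | right]; split; auto.
Qed.

End BrillouinZones.

Theorem mainTheorem1 (X : Type) (d : X -> X -> R)
  (hmet : @is_metric X d) (hprop : @proper_metric X d) (hpc : @path_connected X d)
  (S : X -> Prop) (hdisc : @discrete X d S)
  (n : nat) (hn1 : (1 <= n)%nat) (hnS : @card_ge X S n) :
  (forall x : X, exists x0, S x0 /\ @B_zone X d S n x0 x) /\
  (forall xi xj : X, S xi -> S xj -> xi <> xj ->
     forall x, ~ (@b_zone X d S n xi x /\ @b_zone X d S n xj x)).
Proof.
  destruct hmet as [hpos _].
  split.
  - intros x.
    destruct (exists_critical_site X d S n hpos hprop hdisc hn1 x hnS)
      as [x0 [Sx0 [Hn Hmin]]].
    exists x0. split; [assumption |].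
    exact (B_zone_of_critical_site X d S n hpos hprop hdisc hn1 x x0 Sx0 Hn Hmin).
  - intros xi xj Si Sj Hne x. exact (b_zone_disjoint X d S n xi xj x Si Sj Hne).
Qed.
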